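(* Let $n\ge 2$, let $\alpha_1,\dots,\alpha_n>0$ be ordinals, let $i\in[1,n]$ and let $\alpha_i'>\alpha_i$. Then $$\mathbf{w}(\omega^{\alpha_1}\times\dots\times\omega^{\alpha_i}\times\dots\times\omega^{\alpha_n})<\mathbf{w}(\omega^{\alpha_1}\times\dots\times\omega^{\alpha_i'}\times\dots\times\omega^{\alpha_n}).$$
   Context: Products have the componentwise order. The width $\mathbf{w}(A)$ of a wqo $A$ is the rank of the forest of nonempty finite sequences of pairwise incomparable elements of $A$ ordered by initial segment. *)

From mathcomp Require Import all_boot.
Set Implicit Arguments. Unset Strict Implicit. Unset Printing Implicit Defensive.

(* Ordinals given concretely as well-ordered types.                   *)
Record wellorder := WellOrder {
  wo_car :> Type;
  wo_lt : wo_car -> wo_car -> Prop;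
  wo_irr : forall x, ~ wo_lt x x;
  wo_trans : forall x y z, wo_lt x y -> wo_lt y z -> wo_lt x z;
  wo_total : forall x y, wo_lt x y \/ x = y \/ wo_lt y x;
  wo_wf : well_founded wo_lt }.

Definition ord_eq (A B : wellorder) : Prop :=
  exists f : A -> B,
    (forall x y, wo_lt x y <-> wo_lt (f x) (f y)) /\ (forall z, exists x, f x = z).

Definition ord_lt (A B : wellorder) : Prop :=
  exists (b : B) (f : A -> B),
    (forall x y, wo_lt x y <-> wo_lt (f x) (f y)) /\
    (forall z, wo_lt z b <-> exists x, f x = z).

Definition ord_pos (A : wellorder) : Prop := inhabited A.

(* omega^A via Cantor normal form: finite non-increasing sequences of  *)
(* elements of A (w^b1 + ... + w^bk, b1 >= ... >= bk), ordered         *)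
(* lexicographically (a proper prefix being smaller).                 *)
Fixpoint nonincr (A : wellorder) (s : seq A) : Prop :=
  match s with
  | x :: ((y :: _) as t) => ~ wo_lt x y /\ nonincr t
  | _ => True
  end.

Fixpoint lexlt (A : wellorder) (s t : seq A) : Prop :=
  match s, t with
  | [::], _ :: _ => True
  | x :: s', y :: t' => wo_lt x y \/ (x = y /\ lexlt s' t')
  | _, _ => False
  end.

Definition omega_pow (A : wellorder) : Type := {s : seq A | nonincr s}.

Definition omega_pow_le (A : wellorder) (a b : omega_pow A) : Prop :=
  lexlt (proj1_sig a) (proj1_sig b) \/ proj1_sig a = proj1_sig b.

Definition prod_omega (n : nat) (W : 'I_n -> wellorder) : Type :=
  forall j : 'I_n, omega_pow (W j).

Definition prod_omega_le (n : nat) (W : 'I_n -> wellorder)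
  (x y : prod_omega W) : Prop := forall j, omega_pow_le (x j) (y j).

(* Set-theoretic (Aczel/Brouwer-style) ordinals, used for ranks.       *)
(* [osup I f] denotes the least ordinal strictly above every f i,      *)
(* i.e. sup_i (f i + 1).                                              *)
Inductive Ord : Type := osup : forall I1 : Type, (I1 -> Ord) -> Ord.

Fixpoint ole (a b : Ord) {struct a} : Prop :=
  match a, b with
  | @osup I1 f, @osup J1 g => forall i, exists j, ole (f i) (g j)
  end.

Definition olt (a b : Ord) : Prop :=
  match b with @osup J1 g => exists j, ole a (g j) end.

(* Rank in a (well-founded) forest: [child y x] means y is a child of x.
   rank x = sup { rank y + 1 | y child of x }. *)
Inductive has_rank (X : Type) (child : X -> X -> Prop) : X -> Ord -> Prop :=
| HasRank : forall x (f : {y | child y x} -> Ord),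
    (forall y, has_rank child (proj1_sig y) (f y)) ->
    has_rank child x (osup f).

Definition forest_rank (X : Type) (child : X -> X -> Prop) (o : Ord) : Prop :=
  exists f : X -> Ord, (forall x, has_rank child x (f x)) /\ o = osup f.

Definition incomparable (X : Type) (le : X -> X -> Prop) (x y : X) : Prop :=
  ~ le x y /\ ~ le y x.

Fixpoint all_incomp (X : Type) (le : X -> X -> Prop) (x : X) (s : seq X) : Prop :=
  match s with [::] => True | y :: t => incomparable le x y /\ all_incomp le x t end.

Fixpoint antichain_seq (X : Type) (le : X -> X -> Prop) (s : seq X) : Prop :=
  match s with [::] => True | x :: t => all_incomp le x t /\ antichain_seq le t end.

Definition antichain_node (X : Type) (le : X -> X -> Prop) : Type :=
  {s : seq X | s <> [::] /\ antichain_seq le s}.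

Definition node_child (X : Type) (le : X -> X -> Prop)
  (t s : antichain_node le) : Prop :=
  exists u : seq X, u <> [::] /\ proj1_sig t = proj1_sig s ++ u.

Definition width_is (X : Type) (le : X -> X -> Prop) (o : Ord) : Prop :=
  forest_rank (@node_child X le) o.

From Stdlib Require Import Classical ClassicalEpsilon Wellfounded.
From mathcomp Require Import all_boot.
Set Implicit Arguments. Unset Strict Implicit. Unset Printing Implicit Defensive.

(* Each omega^alpha is well ordered, so every sequence in it has an ascending
   subsequence; this property passes to finite products, hence the forest of
   antichain sequences of a product is well founded and its width exists.
   Coordinatewise, omega^alpha_j maps order-reflectingly into omega^alpha'_j:
   at i through the embedding of alpha_i below some b in alpha_i', elsewhere
   through the isomorphism followed by appending the least exponent.  The
   element x = ([::], .., [:: b], .., [::]) is then incomparable to the whole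
   image, being above it at i and below it at any other coordinate (n >= 2).
   Prepending x to the images of the antichains of the smaller product embeds
   its whole forest below the node [:: x], so the width strictly increases. *)

Lemma dependent_functional_choice (I : Type) (T : I -> Type) (P : forall i, T i -> Prop) :
  (forall i, exists x, P i x) -> exists f : forall i, T i, forall i, P i (f i).
Proof.
move=> H; exists (fun i => proj1_sig (constructive_indefinite_description _ (H i))).
by move=> i; case: constructive_indefinite_description.
Qed.

Section AlmostFull.
Variables (X : Type) (le : X -> X -> Prop).

Definition almost_full : Prop :=
  forall f : nat -> X, exists a b, a < b /\ le (f a) (f b).

Definition ascending_subseqs : Prop :=
  forall f : nat -> X, exists phi : nat -> nat,
    {homo phi : a b / a < b} /\ forall a b, a < b -> le (f (phi a)) (f (phi b)).

Lemma almost_full_ascending_subseqs : ascending_subseqs -> almost_full.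
Proof.
move=> asc f; have [phi [phi_incr phi_asc]] := asc f.
by exists (phi 0), (phi 1); split; [apply: phi_incr | apply: phi_asc].
Qed.

Variable lt : X -> X -> Prop.
Hypotheses (lt_wf : well_founded lt) (lt_or_ge : forall x y, lt x y \/ le y x).

Lemma exists_least (P : X -> Prop) y : P y -> exists m, P m /\ forall z, P z -> le m z.
Proof.
elim: (lt_wf y) => {}y _ IH Py.
case: (classic (exists z, P z /\ lt z y)) => [[z [Pz lt_zy]]|N].
- exact: IH _ lt_zy Pz.
- exists y; split => // z Pz; case: (lt_or_ge z y) => // lt_zy.
  by case: N; exists z.
Qed.

(* Pick for every c an index [M c >= c] where f is least on [c, oo); iterating
   [k |-> (M k).+1] gives the ascending subsequence. *)
Lemma ascending_subseqs_wf_total : ascending_subseqs.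
Proof.
move=> f.
have [M HM] : exists M : nat -> nat, forall c, c <= M c /\ forall j, c <= j -> le (f (M c)) (f j).
  apply: (dependent_functional_choice
    (P := fun c m => c <= m /\ forall j, c <= j -> le (f m) (f j))) => c.
  have [_ [[m [le_cm <-]] least]] :=
    exists_least (P := fun y => exists j, c <= j /\ f j = y) (ex_intro _ c (conj (leqnn c) erefl)).
  by exists m; split => // j le_cj; apply: least; exists j.
pose phi := fix phi k := if k is k'.+1 then M (phi k').+1 else M 0.
have phi_least k j : phi k <= j -> le (f (phi k)) (f j).
  by case: k => [|k] le_j; apply: (proj2 (HM _)); apply: leq_trans (proj1 (HM _)) le_j.
have phi_incr : {homo phi : a b / a < b}.
  by apply: homo_ltn => [|k]; [exact: ltn_trans | exact: (proj1 (HM _))].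
by exists phi; split => // a b lt_ab; apply/phi_least/ltnW/phi_incr.
Qed.

End AlmostFull.

Lemma ascending_subseqs_prod (n : nat) (T : 'I_n -> Type) (le : forall j, T j -> T j -> Prop) :
  (forall j, ascending_subseqs (le j)) ->
  ascending_subseqs (fun x y : forall j, T j => forall j, le j (x j) (y j)).
Proof.
move=> Hasc f.
suff /(_ n) [phi [phi_incr Hphi]] : forall m, exists phi : nat -> nat,
    {homo phi : a b / a < b} /\
    forall j : 'I_n, j < m -> forall a b, a < b -> le j (f (phi a) j) (f (phi b) j).
  by exists phi; split => // a b lt_ab j; exact: Hphi (ltn_ord j) _ _ lt_ab.
elim=> [|m [phi [phi_incr Hphi]]]; first by exists id; split.
have [lt_mn|le_nm] := ltnP m n; last first.
  by exists phi; split => // j _; apply: Hphi; apply: leq_trans (ltn_ord j) le_nm.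
have [psi [psi_incr Hpsi]] := Hasc (Ordinal lt_mn) (fun a => f (phi a) (Ordinal lt_mn)).
exists (phi \o psi); split => [a b lt_ab|j]; first exact/phi_incr/psi_incr.
rewrite ltnS leq_eqVlt => /orP [/eqP eq_jm|lt_jm] a b lt_ab.
- have -> : j = Ordinal lt_mn by apply: val_inj.
  exact: Hpsi.
- exact/Hphi/psi_incr.
Qed.

Section OmegaPow.
Variable A : wellorder.
Implicit Types (s t : seq A) (a b : omega_pow A).

Lemma lexlt_total s t : lexlt s t \/ s = t \/ lexlt t s.
Proof.
elim: s t => [|x s IH] [|y t] /=; auto.
case: (wo_total x y) => [lt_xy|[<-|lt_yx]]; auto.
by case: (IH t) => [lt_st|[->|lt_ts]]; auto.
Qed.

Lemma lexlt_nil_r s : ~ lexlt s [::].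
Proof. by case: s => [|x s] []. Qed.

Lemma nonincr_behead x s : nonincr (x :: s) -> nonincr s.
Proof. by case: s => //= y s []. Qed.

Definition lexlt_nonincr s t := nonincr s /\ lexlt s t.

Definition head_le x s := if s is y :: _ then ~ wo_lt x y else True.

(* Induction on the bound x of the leading exponent; the sequences starting
   with x itself are handled by an inner induction on their tails. *)
Lemma Acc_lexlt_nonincr_below x s : nonincr s -> head_le x s -> Acc lexlt_nonincr s.
Proof.
have Acc_nil : Acc lexlt_nonincr [::] by constructor=> t [_]; case: t.
elim: (wo_wf x) s => {}x _ IHx.
have Acc_lt_head t : nonincr t -> (if t is y :: _ then wo_lt y x else True) ->
    Acc lexlt_nonincr t.
  case: t => [|y t] t_nonincr lt_yx; first exact: Acc_nil.
  exact: IHx lt_yx _ t_nonincr (@wo_irr _ y).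
have Acc_cons u : Acc lexlt_nonincr u -> Acc lexlt_nonincr (x :: u).
  elim=> {}u _ IHu; constructor=> -[|y t] [t_nonincr] /=.
    by move=> _; exact: Acc_nil.
  case=> [lt_yx|[eq_yx lt_tu]]; first exact: Acc_lt_head.
  by subst y; apply: IHu; split => //; apply: nonincr_behead t_nonincr.
elim=> [|y s IHs] s_nonincr le_yx; first exact: Acc_nil.
case: (wo_total y x) => [lt_yx|[eq_yx|lt_xy]]; first exact: Acc_lt_head.
- subst y; apply/Acc_cons/IHs; first exact: nonincr_behead s_nonincr.
  by case: s s_nonincr {IHs le_yx} => //= z s [].
- by case: le_yx.
Qed.

Definition omega_pow_lt a b := lexlt (sval a) (sval b).

Lemma omega_pow_lt_wf : well_founded omega_pow_lt.
Proof.
move=> a; apply: (@Acc_incl _ _ (fun a b => lexlt_nonincr (sval a) (sval b))).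
  by move=> b c lt_bc; split; [exact: svalP | exact: lt_bc].
apply: Acc_inverse_image; case: a => -[|x s] s_nonincr /=.
  by constructor=> -[|y t] [_].
by apply: (Acc_lexlt_nonincr_below (x := x)) => //=; apply: wo_irr.
Qed.

Lemma ascending_subseqs_omega_pow : ascending_subseqs (@omega_pow_le A).
Proof.
apply: (ascending_subseqs_wf_total omega_pow_lt_wf) => a b.
by case: (lexlt_total (sval a) (sval b)) => [|[|]]; rewrite /omega_pow_le; auto.
Qed.

End OmegaPow.

Lemma not_Acc_descending_chain (T : Type) (R : T -> T -> Prop) x :
  ~ Acc R x -> exists g : nat -> T, g 0 = x /\ forall k, R (g k.+1) (g k).
Proof.
move=> not_acc_x.
have [next Hnext] : exists next : {y | ~ Acc R y} -> {y | ~ Acc R y},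
    forall y, R (sval (next y)) (sval y).
  apply: (dependent_functional_choice (P := fun y z => R (sval z) (sval y))).
  move=> [y not_acc_y]; apply: NNPP => N; apply: (not_acc_y); constructor=> z Rzy.
  by apply: NNPP => not_acc_z; apply: N; exists (exist _ z not_acc_z).
exists (fun k => sval (iter k next (exist _ x not_acc_x))); split => // k.
exact: Hnext.
Qed.

Section AntichainForest.
Variables (X : Type) (le : X -> X -> Prop).

Lemma incomparable_nth_antichain_seq s x0 a b :
  antichain_seq le s -> a < b -> b < size s -> incomparable le (nth x0 s a) (nth x0 s b).
Proof.
have incomp_all x t c : all_incomp le x t -> c < size t -> incomparable le x (nth x0 t c).
  by elim: t c => [|y t IH] [|c] //= [? ?] ?; auto.
elim: s a b => [|x s IH] [|a] [|b] //= [x_incomp s_antichain] lt_ab lt_b.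
- exact: incomp_all.
- exact: IH.
Qed.

Section ExtensionChain.
Variables (L : nat -> seq X) (x0 : X).
Hypotheses (L0_neq_nil : L 0 <> [::])
           (L_ext : forall k, exists2 u, u <> [::] & L k.+1 = L k ++ u).

Lemma size_extension_chain k : k < size (L k).
Proof.
elim: k => [|k IH]; first by case: (L 0) L0_neq_nil.
have [[|y u] // _ ->] := L_ext k.
by rewrite size_cat /= addnS ltnS (leq_trans IH) ?leq_addr.
Qed.

Lemma nth_extension_chain a b : a <= b -> nth x0 (L b) a = nth x0 (L a) a.
Proof.
move=> /subnK <-; elim: (b - a) => [|d IH] //.
have [u _ ->] := L_ext (d + a).
by rewrite nth_cat (leq_ltn_trans (leq_addl d a) (size_extension_chain _)).
Qed.

End ExtensionChain.

(* An infinite descending chain of antichain nodes yields the bad sequence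
   [k |-> nth (L k) k] of its diagonal. *)
Lemma Acc_node_child : almost_full le -> forall s, Acc (@node_child X le) s.
Proof.
move=> af s; apply: NNPP.
move=> /(@not_Acc_descending_chain _ (@node_child X le)) [g [g0 g_child]].
pose L k := sval (g k).
have L0_neq_nil : L 0 <> [::] by rewrite /L g0; case: (svalP s).
have L_ext k : exists2 u, u <> [::] & L k.+1 = L k ++ u.
  by have [u []] := g_child k; exists u.
have [x0] : inhabited X by case: (L 0) L0_neq_nil => // x; exists.
have [a [b [lt_ab le_ab]]] := af (fun k => nth x0 (L k) k).
have [+ _] := incomparable_nth_antichain_seq x0 (proj2 (svalP (g b))) lt_ab
  (size_extension_chain L0_neq_nil L_ext b).
by rewrite -/(L b) (nth_extension_chain x0 L0_neq_nil L_ext (ltnW lt_ab)); apply.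
Qed.

End AntichainForest.

Lemma has_rank_of_Acc (T : Type) (child : T -> T -> Prop) x :
  Acc child x -> exists o, has_rank child x o.
Proof.
elim=> {}x _ IH.
have [f Hf] : exists f : {y | child y x} -> Ord, forall y, has_rank child (sval y) (f y).
  apply: (dependent_functional_choice (P := fun y o => has_rank child (sval y) o)).
  by move=> -[y child_y]; exact: IH.
by exists (osup f); constructor.
Qed.

Lemma width_exists (X : Type) (le : X -> X -> Prop) :
  almost_full le -> exists o, width_is le o.
Proof.
move=> af; have [f Hf] : exists f, forall s, has_rank (@node_child X le) s (f s).
  apply: (dependent_functional_choice (P := fun s o => has_rank _ s o)) => s.
  by apply/has_rank_of_Acc/Acc_node_child.
by exists (osup f), f.
Qed.

Lemma has_rank_ole_of_simulation (T U : Type) (cT : T -> T -> Prop) (cU : U -> U -> Prop)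
    (R : T -> U -> Prop) :
  (forall a b a', R a b -> cT a' a -> exists2 b', cU b' b & R a' b') ->
  forall a oa b ob, has_rank cT a oa -> has_rank cU b ob -> R a b -> ole oa ob.
Proof.
move=> sim a oa b ob rank_a; elim: rank_a b ob => {}a f _ IH b ob [{}b g rank_g] Rab.
move=> [a' child_a']; have [b' child_b' Rab'] := sim _ _ _ Rab child_a'.
exists (exist _ b' child_b').
exact: (IH (exist _ a' child_a') b' _ (rank_g (exist _ b' child_b')) Rab').
Qed.

Definition order_reflecting (X Y : Type) (leX : X -> X -> Prop) (leY : Y -> Y -> Prop)
    (e : X -> Y) :=
  forall a b, leY (e a) (e b) -> leX a b.

Section WidthEmbedding.
Variables (X Y : Type) (leX : X -> X -> Prop) (leY : Y -> Y -> Prop) (e : X -> Y) (x : Y).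
Hypotheses (e_reflecting : order_reflecting leX leY e)
           (x_incomp : forall a, incomparable leY x (e a)).

Lemma antichain_node_cons_map s :
  antichain_seq leX s -> x :: map e s <> [::] /\ antichain_seq leY (x :: map e s).
Proof.
have incomp_e a b : incomparable leX a b -> incomparable leY (e a) (e b).
  by case=> not_le_ab not_le_ba; split=> /e_reflecting.
have all_incomp_x t : all_incomp leY x (map e t) by elim: t => //= a t IH; split.
move=> anti_s; do 2!split=> //; elim: s anti_s => //= a s IH [all_a anti_s].
split; last exact: IH.
by elim: s all_a {IH anti_s} => //= b s IH [/incomp_e ? /IH].
Qed.

Definition cons_map_node (s : antichain_node leX) : antichain_node leY :=
  exist _ _ (antichain_node_cons_map (proj2 (svalP s))).

(* Every antichain of X reappears, shifted by x, below the node [x] of Y's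
   forest, so [x] alone has rank at least w(X). *)
Lemma width_lt_of_embedding o o' : width_is leX o -> width_is leY o' -> olt o o'.
Proof.
move=> [fX [rankX ->]] [fY [rankY ->]] /=.
pose root : antichain_node leY := exist _ [:: x] (antichain_node_cons_map (s := [::]) I).
have eq_root : sval root = [:: x] by [].
exists root; case: (rankY root) eq_root => b g rank_g eq_b /= s.
have child_root : node_child (cons_map_node s) b.
  exists (map e (sval s)); rewrite eq_b; split => //.
  by case: (svalP s) => + _; case: (sval s).
exists (exist (fun t => node_child t b) _ child_root).
apply: (@has_rank_ole_of_simulation _ _ _ _ (fun s t => sval t = sval (cons_map_node s)) _
  _ _ _ _ (rankX s) (rank_g _)) => // s1 t s2 eq_t [u [u_neq_nil eq_s2]].
exists (cons_map_node s2) => //.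
exists (map e u); split; first by case: u u_neq_nil {eq_s2}.
by rewrite eq_t /= eq_s2 map_cat.
Qed.

End WidthEmbedding.

Definition order_embedding (A B : wellorder) (g : A -> B) :=
  forall x y, wo_lt x y <-> wo_lt (g x) (g y).

Lemma ord_eq_inverse_embedding (A B : wellorder) :
  ord_eq A B -> exists g : B -> A, order_embedding g.
Proof.
move=> [f [f_emb f_surj]].
have [g fgK] : exists g : B -> A, forall z, f (g z) = z.
  by apply: (dependent_functional_choice (P := fun z x => f x = z)).
by exists g => z z'; rewrite f_emb !fgK.
Qed.

Lemma wellorder_bottom (B : wellorder) : inhabited B -> exists m : B, forall w, ~ wo_lt w m.
Proof.
move=> [b]; have [m [_ m_least]] := exists_least (@wo_wf B)
  (fun x y => classic (wo_lt x y)) (P := fun _ => True) (y := b) I.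
by exists m => w; apply: m_least.
Qed.

Section OmegaPowMap.
Variables (A B : wellorder) (g : A -> B).
Hypothesis g_emb : order_embedding g.

Lemma order_embedding_inj : injective g.
Proof.
move=> x y eq_g; case: (wo_total x y) => [|[//|]] /g_emb; rewrite eq_g => /wo_irr [].
Qed.

Lemma nonincr_map s : nonincr s -> nonincr (map g s).
Proof. by elim: s => [|x [|y s] IH] //= [/(contra_not (g_emb x y).2) ? /IH]. Qed.

Lemma lexlt_map s t : lexlt (map g s) (map g t) -> lexlt s t.
Proof.
elim: s t => [|x s IH] [|y t] //= [/g_emb|[/order_embedding_inj eq_xy /IH]]; auto.
Qed.

Definition omega_pow_map (a : omega_pow A) : omega_pow B :=
  exist _ _ (nonincr_map (svalP a)).

Lemma omega_pow_map_reflecting : order_reflecting (@omega_pow_le A) (@omega_pow_le B) omega_pow_map.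
Proof.
move=> a b; case=> [/lexlt_map|/(inj_map order_embedding_inj)]; rewrite /omega_pow_le; auto.
Qed.

End OmegaPowMap.

Definition omega_pow_nil (A : wellorder) : omega_pow A := exist _ [::] I.

Section OmegaPowEmbeddings.
Variables (A B : wellorder) (g : A -> B).
Hypothesis g_emb : order_embedding g.

(* The witness maps s to [rcons (map g s) m], with m the least element of B. *)
Lemma omega_pow_embedding_above_nil : inhabited B ->
  exists2 e : omega_pow A -> omega_pow B, order_reflecting (@omega_pow_le A) (@omega_pow_le B) e
    & forall a, ~ omega_pow_le (e a) (omega_pow_nil B).
Proof.
move=> /wellorder_bottom [m m_bottom].
have nonincr_rcons s : nonincr s -> nonincr (rcons s m).
  by elim: s => [|x [|y s] IH] //= [? /IH]; split.
have lexlt_rcons s t : lexlt (rcons s m) (rcons t m) -> lexlt s t.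
  elim: s t => [|x s IH] [|y t] /=.
  - by case=> [/m_bottom|[]].
  - by [].
  - by case=> [/m_bottom|[_ /lexlt_nil_r]].
  - by case=> [|[eq_xy /IH]]; auto.
pose e a : omega_pow B := exist _ _ (nonincr_rcons _ (svalP (omega_pow_map g_emb a))).
exists e => [a b le_ab|a].
  apply: (@omega_pow_map_reflecting _ _ _ g_emb).
  case: le_ab => [lt_ab|eq_ab]; rewrite /omega_pow_le.
  - by left; apply: lexlt_rcons.
  - by right; apply: rcons_injl eq_ab.
by case=> [/lexlt_nil_r|] //=; case: (map g _).
Qed.

Lemma omega_pow_embedding_below b : (forall x, wo_lt (g x) b) ->
  exists2 e : omega_pow A -> omega_pow B, order_reflecting (@omega_pow_le A) (@omega_pow_le B) e
    & forall a, ~ omega_pow_le (exist _ [:: b] I) (e a).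
Proof.
move=> g_below; exists (omega_pow_map g_emb); first exact: omega_pow_map_reflecting.
have below_b x : ~ wo_lt b (g x) /\ b <> g x.
  split=> [lt_b|eq_b]; first exact: wo_irr (wo_trans lt_b (g_below x)).
  by have := g_below x; rewrite -eq_b; apply: wo_irr.
case=> -[|x s] ? /=; rewrite /omega_pow_le /= => -[] //.
- by case=> [/(below_b x).1|[/(below_b x).2]].
- by case=> /(below_b x).2.
Qed.

End OmegaPowEmbeddings.

Lemma width_prod_omega_exists (n : nat) (W : 'I_n -> wellorder) :
  exists o, width_is (@prod_omega_le n W) o.
Proof.
apply/width_exists/almost_full_ascending_subseqs.
exact (ascending_subseqs_prod (fun j => @ascending_subseqs_omega_pow (W j))).
Qed.

Lemma exists_ord_neq (n : nat) (i : 'I_n) : 1 < n -> exists k : 'I_n, k != i.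
Proof.
move=> lt_1n; have lt_0n := ltnW lt_1n.
have [->|ne_i0] := eqVneq i (Ordinal lt_0n); first by exists (Ordinal lt_1n).
by exists (Ordinal lt_0n); rewrite eq_sym.
Qed.

Theorem mainTheorem10 (n : nat) (W W' : 'I_n -> wellorder) (i : 'I_n) :
  2 <= n ->
  (forall j, ord_pos (W j)) ->
  (forall j, j != i -> ord_eq (W' j) (W j)) ->
  ord_lt (W i) (W' i) ->
  exists o o' : Ord,
    width_is (@prod_omega_le n W) o /\
    width_is (@prod_omega_le n W') o' /\
    olt o o'.
Proof.
move=> le_2n W_pos eq_W lt_Wi.
have coord j : exists xe : omega_pow (W' j) * (omega_pow (W j) -> omega_pow (W' j)),
    order_reflecting (@omega_pow_le _) (@omega_pow_le _) xe.2 /\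
    if j == i then forall a, ~ omega_pow_le xe.1 (xe.2 a)
    else forall a, ~ omega_pow_le (xe.2 a) xe.1.
  case: eqVneq => [->|ne_ji].
  - have [b [g [g_emb g_onto]]] := lt_Wi.
    have [e e_refl e_below] :=
      omega_pow_embedding_below g_emb (fun x => (g_onto _).2 (ex_intro _ x erefl)).
    by exists (exist _ [:: b] I, e).
  - have [g g_emb] := ord_eq_inverse_embedding (eq_W j ne_ji).
    have [x0] := W_pos j.
    have [e e_refl e_above] := omega_pow_embedding_above_nil g_emb (inhabits (g x0)).
    by exists (omega_pow_nil _, e).
have [F F_spec] := dependent_functional_choice coord.
pose e (a : prod_omega W) : prod_omega W' := fun j => (F j).2 (a j).
pose x : prod_omega W' := fun j => (F j).1.
have [o Ho] := width_prod_omega_exists W.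
have [o' Ho'] := width_prod_omega_exists W'.
exists o, o'; do 2!split=> //.
apply: (@width_lt_of_embedding _ _ _ _ e x _ _ _ _ Ho Ho') => [a b le_ab j|a].
  exact: (F_spec j).1 _ _ (le_ab j).
have [k ne_ki] := exists_ord_neq i le_2n.
split=> le_x.
- by have := (F_spec i).2; rewrite eqxx; apply; apply: le_x.
- by have := (F_spec k).2; rewrite (negbTE ne_ki); apply; apply: le_x.
Qed.
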